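(* Let $k$ be an algebraically closed field of characteristic $0$, $\alpha\in k$ with $\alpha(1-\alpha^2)\neq 0$, and let $\mathcal L_1,\mathcal L_2,\mathcal L_3,\mathcal L_4,\mathcal L_{5a},\mathcal L_{5b},\mathcal L_{6a},\mathcal L_{6b}\subset\mathbb P^5$ be the curves defined in the context (the irreducible components of the line scheme of $A(\alpha)$). Then these components intersect at twenty distinct points. The pairs meeting in exactly one point are \[ \mathcal L_2\cap\mathcal L_3=\mathcal L_2\cap\mathcal L_4=\mathcal L_3\cap\mathcal L_4=\{E_2\},\quad \mathcal L_3\cap\mathcal L_{5a}=\{E_3\},\quad \mathcal L_4\cap\mathcal L_{6a}=\{E_4\},\quad \mathcal L_{5a}\cap\mathcal L_{6a}=\{E_5\}; \] the pairs meeting in two distinct points are \[ \begin{aligned} &\mathcal L_1\cap\mathcal L_3=\{(1,0,\pm i,0,0,0)\}, && \mathcal L_2\cap\mathcal L_{5b}=\{(0,0,0,0,a,\pm ib)\},\\ &\mathcal L_1\cap\mathcal L_4=\{(0,0,0,\alpha,0,1\pm d)\}, && \mathcal L_2\cap\mathcal L_{6b}=\{(b,0,0,0,\pm i,0)\},\\ &\mathcal L_1\cap\mathcal L_{5b}=\{(0,0,\pm ia,0,0,1)\}, && \mathcal L_{5a}\cap\mathcal L_{5b}=\{(0,0,b,0,\pm i,0)\},\\ &\mathcal L_1\cap\mathcal L_{6b}=\{(\pm ia,0,0,1,0,0)\}, && \mathcal L_{6a}\cap\mathcal L_{6b}=\{(0,0,0,b,\pm ia,0)\}, \end{aligned} \]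 where $i,a,b,d\in k$ satisfy $i^2=-1$, $a^2=\alpha$, $b^2=2$, $d^2=1-\alpha^2$; and all other pairwise intersections are empty.
   Context: Points of $\mathbb P^5$ are written in homogeneous coordinates $(M_{12},M_{13},M_{14},M_{23},M_{24},M_{34})$, and $E_j$ denotes the point whose $j$-th coordinate is $1$ and all others $0$. With $\mathcal V(S)$ the zero locus of $S$: $\mathcal L_1=\mathcal V(M_{13},M_{24},M_{12}M_{34}+M_{14}M_{23},M_{12}^2+M_{14}^2+\alpha M_{23}^2-2M_{23}M_{34}+\alpha M_{34}^2)$; $\mathcal L_2=\mathcal V(M_{14},M_{23},M_{12}M_{34}-M_{13}M_{24},M_{12}^2+2M_{24}^2+\alpha M_{34}^2)$; $\mathcal L_3=\mathcal V(M_{23},M_{24},M_{34},M_{12}^3-M_{13}^2M_{14}+M_{12}M_{14}^2)$; $\mathcal L_4=\mathcal V(M_{12},M_{14},M_{24},M_{13}^2M_{23}-\alpha M_{23}^2M_{34}+2M_{23}M_{34}^2-\alpha M_{34}^3)$; $\mathcal L_{5a}=\mathcal V(M_{12},M_{13},M_{23},M_{34})$; $\mathcal L_{5b}=\mathcal V(M_{12},M_{13},M_{23},M_{14}^2+2M_{24}^2+\alpha M_{34}^2)$; $\mathcal L_{6a}=\mathcal V(M_{12},M_{13},M_{14},M_{34})$; $\mathcal L_{6b}=\mathcal V(M_{13},M_{14},M_{34},M_{12}^2+\alpha M_{23}^2+2M_{24}^2)$. (These are the irreducible components of the line scheme of the algebra $A(\alpha)$ on generators $x_1,\dots,x_4$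 with relations $x_3x_1+x_1x_3=0$, $x_3x_2-x_2x_3=0$, $2x_2^2+\alpha x_3^2=x_1^2$, $x_4x_1+x_1x_4=0$, $x_2^2-x_4^2=0$, $x_4x_2+x_2x_4=x_3^2$.) *)

(* Points of P^5 over k are nonzero row vectors in k^6
   up to nonzero scalars; coordinate order (M12,M13,M14,M23,M24,M34). *)
From mathcomp Require Import all_boot all_order all_algebra.
Set Implicit Arguments. Unset Strict Implicit. Unset Printing Implicit Defensive.
Import GRing.Theory.
Local Open Scope ring_scope.

Section Defs.
Variable k : fieldType.

Definition coord (n : nat) (v : 'rV[k]_6) : k := v ord0 (inord n).
Definition M12 := coord 0. Definition M13 := coord 1. Definition M14 := coord 2.
Definition M23 := coord 3. Definition M24 := coord 4. Definition M34 := coord 5.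

Definition mkpt (x0 x1 x2 x3 x4 x5 : k) : 'rV[k]_6 :=
  \row_(j < 6) nth 0 [:: x0; x1; x2; x3; x4; x5] j.

(* E_j : j-th coordinate (1-indexed) equal to 1 *)
Definition E (j : nat) : 'rV[k]_6 := \row_(l < 6) (if l == j.-1 :> nat then 1 else 0).

Definition proj_eq (u v : 'rV[k]_6) : Prop := exists c : k, c != 0 /\ u = c *: v.

Inductive comp := L1 | L2 | L3 | L4 | L5a | L5b | L6a | L6b.

Definition onL (alpha : k) (c : comp) (v : 'rV[k]_6) : Prop :=
  match c with
  | L1 => [/\ M13 v = 0, M24 v = 0, M12 v * M34 v + M14 v * M23 v = 0 &
             M12 v ^+ 2 + M14 v ^+ 2 + alpha * M23 v ^+ 2 - 2 * M23 v * M34 v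
               + alpha * M34 v ^+ 2 = 0]
  | L2 => [/\ M14 v = 0, M23 v = 0, M12 v * M34 v - M13 v * M24 v = 0 &
             M12 v ^+ 2 + 2 * M24 v ^+ 2 + alpha * M34 v ^+ 2 = 0]
  | L3 => [/\ M23 v = 0, M24 v = 0, M34 v = 0 &
             M12 v ^+ 3 - M13 v ^+ 2 * M14 v + M12 v * M14 v ^+ 2 = 0]
  | L4 => [/\ M12 v = 0, M14 v = 0, M24 v = 0 &
             M13 v ^+ 2 * M23 v - alpha * M23 v ^+ 2 * M34 v
               + 2 * M23 v * M34 v ^+ 2 - alpha * M34 v ^+ 3 = 0]
  | L5a => [/\ M12 v = 0, M13 v = 0, M23 v = 0 & M34 v = 0]
  | L5b => [/\ M12 v = 0, M13 v = 0, M23 v = 0 &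
              M14 v ^+ 2 + 2 * M24 v ^+ 2 + alpha * M34 v ^+ 2 = 0]
  | L6a => [/\ M12 v = 0, M13 v = 0, M14 v = 0 & M34 v = 0]
  | L6b => [/\ M13 v = 0, M14 v = 0, M34 v = 0 &
              M12 v ^+ 2 + alpha * M23 v ^+ 2 + 2 * M24 v ^+ 2 = 0]
  end.

Definition meets (alpha : k) (c1 c2 : comp) (S : seq 'rV[k]_6) : Prop :=
  forall v : 'rV[k]_6, v != 0 ->
    (onL alpha c1 v /\ onL alpha c2 v) <-> (exists2 p, p \in S & proj_eq v p).

Definition distinct_points (S : seq 'rV[k]_6) : Prop :=
  (forall p, p \in S -> p != 0) /\
  (forall m n, (m < n < size S)%N -> ~ proj_eq (nth 0 S m) (nth 0 S n)).

End Defs.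

(* On the intersection of two components the linear equations of both leave at most
   two free coordinates, and one remaining equation becomes a binary quadratic form in
   them.  With i, a, b, d at hand this form splits into two linear factors, whose zeros
   are the two listed points; when it is c x^2 with c != 0 the intersection is empty,
   and when a single coordinate is free we get a coordinate point E_j.  Conversely the
   defining equations are homogeneous, so every multiple of a listed point lies on both
   components. *)

From Pilot Require Import Defs.
From mathcomp Require Import all_boot all_order all_algebra.
From mathcomp Require Import ring.
Set Implicit Arguments. Unset Strict Implicit. Unset Printing Implicit Defensive.
Import GRing.Theory.
Local Open Scope ring_scope.

Section Coordinates.
Variable k : fieldType.
Implicit Types (s : k) (v : 'rV[k]_6).

Lemma coord_mkpt n (x0 x1 x2 x3 x4 x5 : k) : (n < 6)%N ->
  Defs.coord n (mkpt x0 x1 x2 x3 x4 x5) = nth 0 [:: x0; x1; x2; x3; x4; x5] n.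
Proof. by move=> lt_n6; rewrite /Defs.coord mxE inordK. Qed.

Lemma M12_mkpt (x0 x1 x2 x3 x4 x5 : k) : M12 (mkpt x0 x1 x2 x3 x4 x5) = x0.
Proof. exact: coord_mkpt. Qed.
Lemma M13_mkpt (x0 x1 x2 x3 x4 x5 : k) : M13 (mkpt x0 x1 x2 x3 x4 x5) = x1.
Proof. exact: coord_mkpt. Qed.
Lemma M14_mkpt (x0 x1 x2 x3 x4 x5 : k) : M14 (mkpt x0 x1 x2 x3 x4 x5) = x2.
Proof. exact: coord_mkpt. Qed.
Lemma M23_mkpt (x0 x1 x2 x3 x4 x5 : k) : M23 (mkpt x0 x1 x2 x3 x4 x5) = x3.
Proof. exact: coord_mkpt. Qed.
Lemma M24_mkpt (x0 x1 x2 x3 x4 x5 : k) : M24 (mkpt x0 x1 x2 x3 x4 x5) = x4.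
Proof. exact: coord_mkpt. Qed.
Lemma M34_mkpt (x0 x1 x2 x3 x4 x5 : k) : M34 (mkpt x0 x1 x2 x3 x4 x5) = x5.
Proof. exact: coord_mkpt. Qed.

Definition mkptE := (M12_mkpt, M13_mkpt, M14_mkpt, M23_mkpt, M24_mkpt, M34_mkpt).

Lemma mkpt_coord v : v = mkpt (M12 v) (M13 v) (M14 v) (M23 v) (M24 v) (M34 v).
Proof.
apply/rowP => j; rewrite mxE /M12 /M13 /M14 /M23 /M24 /M34 /Defs.coord.
by case: j => -[|[|[|[|[|[|//]]]]]] lt_j6; congr (v ord0 _); apply: val_inj; rewrite /= inordK.
Qed.

Lemma coordZ n s v : Defs.coord n (s *: v) = s * Defs.coord n v.
Proof. by rewrite /Defs.coord mxE. Qed.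

Lemma scale_mkpt s (x0 x1 x2 x3 x4 x5 : k) :
  s *: mkpt x0 x1 x2 x3 x4 x5 = mkpt (s * x0) (s * x1) (s * x2) (s * x3) (s * x4) (s * x5).
Proof. by apply/rowP => -[[|[|[|[|[|[|//]]]]]] lt_j6]; rewrite !mxE. Qed.

Lemma mkpt_eq0 (x0 x1 x2 x3 x4 x5 : k) :
  (mkpt x0 x1 x2 x3 x4 x5 == 0) =
  [&& x0 == 0, x1 == 0, x2 == 0, x3 == 0, x4 == 0 & x5 == 0].
Proof.
apply/eqP/idP => [v0 | /and5P[/eqP-> /eqP-> /eqP-> /eqP-> /andP[/eqP-> /eqP->]]].
  have coord0 n : Defs.coord n (mkpt x0 x1 x2 x3 x4 x5) = 0 by rewrite v0 /Defs.coord mxE.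
  move: (coord0 0%N) (coord0 1%N) (coord0 2%N) (coord0 3%N) (coord0 4%N) (coord0 5%N).
  by rewrite !coord_mkpt //= => -> -> -> -> -> ->; rewrite eqxx.
by apply/rowP => -[[|[|[|[|[|[|//]]]]]] lt_j6]; rewrite !mxE.
Qed.

Lemma E2_mkpt : E k 2 = mkpt 0 1 0 0 0 0.
Proof. by apply/rowP => -[[|[|[|[|[|[|//]]]]]] lt_j6]; rewrite !mxE. Qed.
Lemma E3_mkpt : E k 3 = mkpt 0 0 1 0 0 0.
Proof. by apply/rowP => -[[|[|[|[|[|[|//]]]]]] lt_j6]; rewrite !mxE. Qed.
Lemma E4_mkpt : E k 4 = mkpt 0 0 0 1 0 0.
Proof. by apply/rowP => -[[|[|[|[|[|[|//]]]]]] lt_j6]; rewrite !mxE. Qed.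
Lemma E5_mkpt : E k 5 = mkpt 0 0 0 0 1 0.
Proof. by apply/rowP => -[[|[|[|[|[|[|//]]]]]] lt_j6]; rewrite !mxE. Qed.

Definition E_mkpt := (E2_mkpt, E3_mkpt, E4_mkpt, E5_mkpt).

End Coordinates.

Section ProjectivePoints.
Variable k : fieldType.

Lemma onLZ (alpha s : k) c v : onL alpha c v -> onL alpha c (s *: v).
Proof.
have homog n (x y : k) : x = 0 -> y = s ^+ n * x -> y = 0 by move=> -> ->; rewrite mulr0.
rewrite /onL /M12 /M13 /M14 /M23 /M24 /M34 !coordZ.
(* Every defining equation is homogeneous, of degree 1, 2 or 3. *)
by case: c => -[h1 h2 h3 h4]; split;
  first [ by apply: homog 1 _ _ h1 _; ring | by apply: homog 1 _ _ h2 _; ring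
        | by apply: homog 1 _ _ h3 _; ring | by apply: homog 2 _ _ h3 _; ring
        | by apply: homog 1 _ _ h4 _; ring | by apply: homog 2 _ _ h4 _; ring
        | by apply: homog 3 _ _ h4 _; ring ].
Qed.

Lemma meets_intro (alpha : k) c1 c2 (S : seq 'rV[k]_6) :
  (forall p, p \in S -> onL alpha c1 p /\ onL alpha c2 p) ->
  (forall x0 x1 x2 x3 x4 x5 : k,
     onL alpha c1 (mkpt x0 x1 x2 x3 x4 x5) -> onL alpha c2 (mkpt x0 x1 x2 x3 x4 x5) ->
     mkpt x0 x1 x2 x3 x4 x5 != 0 ->
     exists2 p, p \in S & proj_eq (mkpt x0 x1 x2 x3 x4 x5) p) ->
  meets alpha c1 c2 S.
Proof.
move=> onS common v v_neq0; split=> [[on1 on2] | [p /onS[on1 on2] [c [_ ->]]]].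
  by move: on1 on2 v_neq0; rewrite [v]mkpt_coord; apply: common.
by split; apply: onLZ.
Qed.

Lemma meets0_intro (alpha : k) c1 c2 :
  (forall x0 x1 x2 x3 x4 x5 : k,
     onL alpha c1 (mkpt x0 x1 x2 x3 x4 x5) -> onL alpha c2 (mkpt x0 x1 x2 x3 x4 x5) ->
     mkpt x0 x1 x2 x3 x4 x5 != 0 -> False) ->
  meets alpha c1 c2 [::].
Proof. by move=> common; apply: meets_intro => // x0 x1 x2 x3 x4 x5 /common/[apply]/[apply]. Qed.

Lemma meets1_intro (alpha : k) c1 c2 (p : 'rV[k]_6) :
  onL alpha c1 p /\ onL alpha c2 p ->
  (forall x0 x1 x2 x3 x4 x5 : k,
     onL alpha c1 (mkpt x0 x1 x2 x3 x4 x5) -> onL alpha c2 (mkpt x0 x1 x2 x3 x4 x5) ->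
     mkpt x0 x1 x2 x3 x4 x5 != 0 -> proj_eq (mkpt x0 x1 x2 x3 x4 x5) p) ->
  meets alpha c1 c2 [:: p].
Proof.
move=> onp common; apply: meets_intro => [q | x0 x1 x2 x3 x4 x5 on1 on2 nz].
  by rewrite inE => /eqP->.
by exists p; [exact: mem_head | exact: common].
Qed.

Lemma meets2_intro (alpha : k) c1 c2 (p q : 'rV[k]_6) :
  onL alpha c1 p /\ onL alpha c2 p -> onL alpha c1 q /\ onL alpha c2 q ->
  (forall x0 x1 x2 x3 x4 x5 : k,
     onL alpha c1 (mkpt x0 x1 x2 x3 x4 x5) -> onL alpha c2 (mkpt x0 x1 x2 x3 x4 x5) ->
     mkpt x0 x1 x2 x3 x4 x5 != 0 ->
     proj_eq (mkpt x0 x1 x2 x3 x4 x5) p \/ proj_eq (mkpt x0 x1 x2 x3 x4 x5) q) ->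
  meets alpha c1 c2 [:: p; q].
Proof.
move=> onp onq common; apply: meets_intro => [r | x0 x1 x2 x3 x4 x5 on1 on2 nz].
  by rewrite !inE => /orP[] /eqP->.
by case: (common _ _ _ _ _ _ on1 on2 nz); [exists p | exists q]; rewrite // !inE eqxx ?orbT.
Qed.

Lemma proportional_of_cross_eq (p q x y : k) :
  p != 0 -> ~~ ((x == 0) && (y == 0)) -> q * x = p * y ->
  exists2 c, c != 0 & x = c * p /\ y = c * q.
Proof.
move=> p_neq0 xy_neq0 cross; have x_neq0 : x != 0.
  apply: contra xy_neq0 => /eqP x0; move/eqP: cross.
  by rewrite x0 mulr0 eq_sym mulf_eq0 (negbTE p_neq0) eqxx.
exists (x / p); first by rewrite mulf_neq0 ?invr_eq0.
split; first by rewrite divfK.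
by apply: (mulfI p_neq0); rewrite -cross; field.
Qed.

Lemma zero_of_linear_factors (p1 q1 p2 q2 x y : k) :
  p1 != 0 -> p2 != 0 -> ~~ ((x == 0) && (y == 0)) ->
  (q1 * x - p1 * y) * (q2 * x - p2 * y) = 0 ->
  exists2 c, c != 0 & (x = c * p1 /\ y = c * q1) \/ (x = c * p2 /\ y = c * q2).
Proof.
move=> p1_neq0 p2_neq0 xy_neq0 /eqP; rewrite mulf_eq0 !subr_eq0 => /orP[] /eqP cross.
  by have [c c_neq0 xy] := proportional_of_cross_eq p1_neq0 xy_neq0 cross; exists c => //; left.
by have [c c_neq0 xy] := proportional_of_cross_eq p2_neq0 xy_neq0 cross; exists c => //; right.
Qed.

Lemma scaled_pow_eq0 (c x : k) n : c != 0 -> c * x ^+ n = 0 -> x = 0.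
Proof. by move=> c_neq0 /eqP; rewrite mulf_eq0 (negbTE c_neq0) expf_eq0 => /andP[_ /eqP]. Qed.

Lemma neq_opp (x : k) : (2 : k) != 0 -> x != 0 -> x != - x.
Proof. by move=> two_neq0 x_neq0; rewrite -subr_eq0 opprK -mulr2n -mulr_natr mulf_neq0. Qed.

Definition support (v : 'rV[k]_6) : seq bool := [seq Defs.coord j v != 0 | j <- iota 0 6].

Lemma support_mkpt (x0 x1 x2 x3 x4 x5 : k) :
  support (mkpt x0 x1 x2 x3 x4 x5) = [:: x0 != 0; x1 != 0; x2 != 0; x3 != 0; x4 != 0; x5 != 0].
Proof. by rewrite /support /= !coord_mkpt. Qed.

Lemma proj_eq_support u v : proj_eq u v -> support u = support v.
Proof. by case=> c [c_neq0 ->]; apply: eq_map => j; rewrite coordZ mulf_eq0 (negbTE c_neq0). Qed.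

Lemma not_proj_eq_pivot (u v : 'rV[k]_6) j l :
  Defs.coord j u = Defs.coord j v -> Defs.coord j u != 0 ->
  Defs.coord l u != Defs.coord l v -> ~ proj_eq u v.
Proof.
move=> eq_j u_j_neq0 neq_l [c [_ u_cv]].
move: eq_j u_j_neq0 neq_l; rewrite u_cv !coordZ => eq_j cv_j_neq0.
have v_j_neq0 : Defs.coord j v != 0 by apply: contraNneq cv_j_neq0 => ->; rewrite mulr0.
have -> : c = 1 by apply: (mulIf v_j_neq0); rewrite mul1r.
by rewrite mul1r eqxx.
Qed.

End ProjectivePoints.

Section LineScheme.
Variables (k : fieldType) (alpha i a b d : k).
Hypotheses (two_neq0 : (2 : k) != 0) (alpha_neq0 : alpha != 0) (alpha2_neq1 : alpha ^+ 2 != 1).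
Hypotheses (hi : i ^+ 2 = -1) (ha : a ^+ 2 = alpha) (hb : b ^+ 2 = 2)
  (hd : d ^+ 2 = 1 - alpha ^+ 2).

Let one_neq0 : (1 : k) != 0 := oner_neq0 k.

Let a_neq0 : a != 0.
Proof. by apply: contraNneq alpha_neq0 => a0; rewrite -ha a0 expr0n. Qed.

Let b_neq0 : b != 0.
Proof. by apply: contraNneq two_neq0 => b0; rewrite -hb b0 expr0n. Qed.

Let i_neq0 : i != 0.
Proof. by apply/eqP => i0; move/eqP: hi; rewrite i0 expr0n eq_sym oppr_eq0 oner_eq0. Qed.

Let d_neq0 : d != 0.
Proof.
by apply/eqP => d0; move/eqP: hd; rewrite d0 expr0n eq_sym subr_eq0 eq_sym (negbTE alpha2_neq1).
Qed.

Let one_add_mul_sub_d : (1 + d) * (1 - d) = alpha ^+ 2.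
Proof. by ring: hd. Qed.

Let one_add_d_neq0 : 1 + d != 0.
Proof. by apply: contraNneq (expf_neq0 2 alpha_neq0) => d1; rewrite -one_add_mul_sub_d d1 mul0r. Qed.

Let one_sub_d_neq0 : 1 - d != 0.
Proof. by apply: contraNneq (expf_neq0 2 alpha_neq0) => d1; rewrite -one_add_mul_sub_d d1 mulr0. Qed.

Lemma meets_L2_L3 : meets alpha L2 L3 [:: E k 2].
Proof.
rewrite E_mkpt; apply: meets1_intro => [|x0 x1 x2 x3 x4 x5].
  by split; rewrite /onL !mkptE; split; ring.
rewrite /onL !mkptE => -[x2_0 x3_0 _ quad] [_ x4_0 x5_0 _]; subst x2 x3 x4 x5.
have x0_0 : x0 = 0 by apply: (scaled_pow_eq0 (n := 2) one_neq0); rewrite -quad; ring.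
by rewrite x0_0 mkpt_eq0 !eqxx /= ?andbT => x1_neq0; exists x1; rewrite // scale_mkpt mulr0 mulr1.
Qed.

Lemma meets_L2_L4 : meets alpha L2 L4 [:: E k 2].
Proof.
rewrite E_mkpt; apply: meets1_intro => [|x0 x1 x2 x3 x4 x5].
  by split; rewrite /onL !mkptE; split; ring.
rewrite /onL !mkptE => -[x2_0 x3_0 _ quad] [x0_0 _ x4_0 _]; subst x0 x2 x3 x4.
have x5_0 : x5 = 0 by apply: (scaled_pow_eq0 (n := 2) alpha_neq0); rewrite -quad; ring.
by rewrite x5_0 mkpt_eq0 !eqxx /= ?andbT => x1_neq0; exists x1; rewrite // scale_mkpt mulr0 mulr1.
Qed.

Lemma meets_L3_L4 : meets alpha L3 L4 [:: E k 2].
Proof.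
rewrite E_mkpt; apply: meets1_intro => [|x0 x1 x2 x3 x4 x5].
  by split; rewrite /onL !mkptE; split; ring.
rewrite /onL !mkptE => -[x3_0 x4_0 x5_0 _] [x0_0 x2_0 _ _]; subst x0 x2 x3 x4 x5.
by rewrite mkpt_eq0 !eqxx /= ?andbT => x1_neq0; exists x1; rewrite // scale_mkpt mulr0 mulr1.
Qed.

Lemma meets_L3_L5a : meets alpha L3 L5a [:: E k 3].
Proof.
rewrite E_mkpt; apply: meets1_intro => [|x0 x1 x2 x3 x4 x5].
  by split; rewrite /onL !mkptE; split; ring.
rewrite /onL !mkptE => -[x3_0 x4_0 x5_0 _] [x0_0 x1_0 _ _]; subst x0 x1 x3 x4 x5.
by rewrite mkpt_eq0 !eqxx /= ?andbT => x2_neq0; exists x2; rewrite // scale_mkpt mulr0 mulr1.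
Qed.

Lemma meets_L4_L6a : meets alpha L4 L6a [:: E k 4].
Proof.
rewrite E_mkpt; apply: meets1_intro => [|x0 x1 x2 x3 x4 x5].
  by split; rewrite /onL !mkptE; split; ring.
rewrite /onL !mkptE => -[x0_0 x2_0 x4_0 _] [_ x1_0 _ x5_0]; subst x0 x1 x2 x4 x5.
by rewrite mkpt_eq0 !eqxx /= ?andbT => x3_neq0; exists x3; rewrite // scale_mkpt mulr0 mulr1.
Qed.

Lemma meets_L5a_L6a : meets alpha L5a L6a [:: E k 5].
Proof.
rewrite E_mkpt; apply: meets1_intro => [|x0 x1 x2 x3 x4 x5].
  by split; rewrite /onL !mkptE; split; ring.
rewrite /onL !mkptE => -[x0_0 x1_0 x3_0 x5_0] [_ _ x2_0 _]; subst x0 x1 x2 x3 x5.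
by rewrite mkpt_eq0 !eqxx /= ?andbT => x4_neq0; exists x4; rewrite // scale_mkpt mulr0 mulr1.
Qed.

Lemma meets_L1_L3 : meets alpha L1 L3 [:: mkpt 1 0 i 0 0 0; mkpt 1 0 (- i) 0 0 0].
Proof.
apply: meets2_intro => [||x0 x1 x2 x3 x4 x5]; try by split; rewrite /onL !mkptE; split; ring: hi.
rewrite /onL !mkptE => -[x1_0 x4_0 _ quad] [x3_0 _ x5_0 _]; subst x1 x3 x4 x5.
rewrite mkpt_eq0 !eqxx /= ?andbT => nz.
have : (i * x0 - 1 * x2) * (- i * x0 - 1 * x2) = 0 by rewrite -quad; ring: hi.
case/(zero_of_linear_factors one_neq0 one_neq0 nz) => c c_neq0 [[-> ->] | [-> ->]];
  [left | right]; by exists c; rewrite // scale_mkpt !mulr0.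
Qed.

Lemma meets_L1_L4 :
  meets alpha L1 L4 [:: mkpt 0 0 0 alpha 0 (1 + d); mkpt 0 0 0 alpha 0 (1 - d)].
Proof.
apply: meets2_intro => [||x0 x1 x2 x3 x4 x5]; try by split; rewrite /onL !mkptE; split; ring: hd.
rewrite /onL !mkptE => -[x1_0 x4_0 _ quad] [x0_0 x2_0 _ _]; subst x0 x1 x2 x4.
rewrite mkpt_eq0 !eqxx /= ?andbT => nz.
have : ((1 + d) * x3 - alpha * x5) * ((1 - d) * x3 - alpha * x5) = 0.
  by rewrite -(mulr0 alpha) -quad; ring: hd.
case/(zero_of_linear_factors alpha_neq0 alpha_neq0 nz) => c c_neq0 [[-> ->] | [-> ->]];
  [left | right]; by exists c; rewrite // scale_mkpt !mulr0.
Qed.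

Lemma meets_L1_L5b :
  meets alpha L1 L5b [:: mkpt 0 0 (i * a) 0 0 1; mkpt 0 0 (- (i * a)) 0 0 1].
Proof.
apply: meets2_intro => [||x0 x1 x2 x3 x4 x5]; try by split; rewrite /onL !mkptE; split; ring: hi ha.
rewrite /onL !mkptE => -[x1_0 x4_0 _ _] [x0_0 _ x3_0 quad]; subst x0 x1 x3 x4.
rewrite mkpt_eq0 !eqxx /= ?andbT andbC => nz.
have : (i * a * x5 - 1 * x2) * (- (i * a) * x5 - 1 * x2) = 0 by rewrite -quad; ring: hi ha.
case/(zero_of_linear_factors one_neq0 one_neq0 nz) => c c_neq0 [[-> ->] | [-> ->]];
  [left | right]; by exists c; rewrite // scale_mkpt !mulr0.
Qed.

Lemma meets_L1_L6b :
  meets alpha L1 L6b [:: mkpt (i * a) 0 0 1 0 0; mkpt (- (i * a)) 0 0 1 0 0].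
Proof.
apply: meets2_intro => [||x0 x1 x2 x3 x4 x5]; try by split; rewrite /onL !mkptE; split; ring: hi ha.
rewrite /onL !mkptE => -[x1_0 x4_0 _ _] [_ x2_0 x5_0 quad]; subst x1 x2 x4 x5.
rewrite mkpt_eq0 !eqxx /= ?andbT andbC => nz.
have : (i * a * x3 - 1 * x0) * (- (i * a) * x3 - 1 * x0) = 0 by rewrite -quad; ring: hi ha.
case/(zero_of_linear_factors one_neq0 one_neq0 nz) => c c_neq0 [[-> ->] | [-> ->]];
  [left | right]; by exists c; rewrite // scale_mkpt !mulr0.
Qed.

Lemma meets_L2_L5b :
  meets alpha L2 L5b [:: mkpt 0 0 0 0 a (i * b); mkpt 0 0 0 0 a (- (i * b))].
Proof.
apply: meets2_intro => [||x0 x1 x2 x3 x4 x5]; try by split; rewrite /onL !mkptE; split; ring: hi ha hb.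
rewrite /onL !mkptE => -[x2_0 x3_0 _ _] [x0_0 x1_0 _ quad]; subst x0 x1 x2 x3.
rewrite mkpt_eq0 !eqxx /= ?andbT => nz.
have : (i * b * x4 - a * x5) * (- (i * b) * x4 - a * x5) = 0 by rewrite -quad; ring: hi ha hb.
case/(zero_of_linear_factors a_neq0 a_neq0 nz) => c c_neq0 [[-> ->] | [-> ->]];
  [left | right]; by exists c; rewrite // scale_mkpt !mulr0.
Qed.

Lemma meets_L2_L6b : meets alpha L2 L6b [:: mkpt b 0 0 0 i 0; mkpt b 0 0 0 (- i) 0].
Proof.
apply: meets2_intro => [||x0 x1 x2 x3 x4 x5]; try by split; rewrite /onL !mkptE; split; ring: hi hb.
rewrite /onL !mkptE => -[x2_0 x3_0 _ _] [x1_0 _ x5_0 quad]; subst x1 x2 x3 x5.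
rewrite mkpt_eq0 !eqxx /= ?andbT => nz.
have : (i * x0 - b * x4) * (- i * x0 - b * x4) = 0 by rewrite -quad; ring: hi hb.
case/(zero_of_linear_factors b_neq0 b_neq0 nz) => c c_neq0 [[-> ->] | [-> ->]];
  [left | right]; by exists c; rewrite // scale_mkpt !mulr0.
Qed.

Lemma meets_L5a_L5b : meets alpha L5a L5b [:: mkpt 0 0 b 0 i 0; mkpt 0 0 b 0 (- i) 0].
Proof.
apply: meets2_intro => [||x0 x1 x2 x3 x4 x5]; try by split; rewrite /onL !mkptE; split; ring: hi hb.
rewrite /onL !mkptE => -[x0_0 x1_0 x3_0 x5_0] [_ _ _ quad]; subst x0 x1 x3 x5.
rewrite mkpt_eq0 !eqxx /= ?andbT => nz.
have : (i * x2 - b * x4) * (- i * x2 - b * x4) = 0 by rewrite -quad; ring: hi hb.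
case/(zero_of_linear_factors b_neq0 b_neq0 nz) => c c_neq0 [[-> ->] | [-> ->]];
  [left | right]; by exists c; rewrite // scale_mkpt !mulr0.
Qed.

Lemma meets_L6a_L6b :
  meets alpha L6a L6b [:: mkpt 0 0 0 b (i * a) 0; mkpt 0 0 0 b (- (i * a)) 0].
Proof.
apply: meets2_intro => [||x0 x1 x2 x3 x4 x5]; try by split; rewrite /onL !mkptE; split; ring: hi ha hb.
rewrite /onL !mkptE => -[x0_0 x1_0 x2_0 x5_0] [_ _ _ quad]; subst x0 x1 x2 x5.
rewrite mkpt_eq0 !eqxx /= ?andbT => nz.
have : (i * a * x3 - b * x4) * (- (i * a) * x3 - b * x4) = 0 by rewrite -quad; ring: hi ha hb.
case/(zero_of_linear_factors b_neq0 b_neq0 nz) => c c_neq0 [[-> ->] | [-> ->]];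
  [left | right]; by exists c; rewrite // scale_mkpt !mulr0.
Qed.

Lemma meets_L1_L2 : meets alpha L1 L2 [::].
Proof.
apply: meets0_intro => x0 x1 x2 x3 x4 x5; rewrite /onL !mkptE.
move=> -[x1_0 x4_0 _ _] [x2_0 x3_0 cross quad]; subst x1 x2 x3 x4.
have /eqP : x0 * x5 = 0 by rewrite -cross; ring.
rewrite mulf_eq0 => /orP[] /eqP zero.
  have x5_0 : x5 = 0 by apply: (scaled_pow_eq0 (n := 2) alpha_neq0); rewrite -quad zero; ring.
  by rewrite zero x5_0 mkpt_eq0 !eqxx.
have x0_0 : x0 = 0 by apply: (scaled_pow_eq0 (n := 2) one_neq0); rewrite -quad zero; ring.
by rewrite zero x0_0 mkpt_eq0 !eqxx.
Qed.

Lemma meets_L1_L5a : meets alpha L1 L5a [::].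
Proof.
apply: meets0_intro => x0 x1 x2 x3 x4 x5; rewrite /onL !mkptE.
move=> -[_ x4_0 _ quad] [x0_0 x1_0 x3_0 x5_0]; subst x0 x1 x3 x4 x5.
have x2_0 : x2 = 0 by apply: (scaled_pow_eq0 (n := 2) one_neq0); rewrite -quad; ring.
by rewrite x2_0 mkpt_eq0 !eqxx.
Qed.

Lemma meets_L1_L6a : meets alpha L1 L6a [::].
Proof.
apply: meets0_intro => x0 x1 x2 x3 x4 x5; rewrite /onL !mkptE.
move=> -[_ x4_0 _ quad] [x0_0 x1_0 x2_0 x5_0]; subst x0 x1 x2 x4 x5.
have x3_0 : x3 = 0 by apply: (scaled_pow_eq0 (n := 2) alpha_neq0); rewrite -quad; ring.
by rewrite x3_0 mkpt_eq0 !eqxx.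
Qed.

Lemma meets_L2_L5a : meets alpha L2 L5a [::].
Proof.
apply: meets0_intro => x0 x1 x2 x3 x4 x5; rewrite /onL !mkptE.
move=> -[x2_0 _ _ quad] [x0_0 x1_0 x3_0 x5_0]; subst x0 x1 x2 x3 x5.
have x4_0 : x4 = 0 by apply: (scaled_pow_eq0 (n := 2) two_neq0); rewrite -quad; ring.
by rewrite x4_0 mkpt_eq0 !eqxx.
Qed.

Lemma meets_L2_L6a : meets alpha L2 L6a [::].
Proof.
apply: meets0_intro => x0 x1 x2 x3 x4 x5; rewrite /onL !mkptE.
move=> -[_ x3_0 _ quad] [x0_0 x1_0 x2_0 x5_0]; subst x0 x1 x2 x3 x5.
have x4_0 : x4 = 0 by apply: (scaled_pow_eq0 (n := 2) two_neq0); rewrite -quad; ring.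
by rewrite x4_0 mkpt_eq0 !eqxx.
Qed.

Lemma meets_L3_L5b : meets alpha L3 L5b [::].
Proof.
apply: meets0_intro => x0 x1 x2 x3 x4 x5; rewrite /onL !mkptE.
move=> -[x3_0 x4_0 x5_0 _] [x0_0 x1_0 _ quad]; subst x0 x1 x3 x4 x5.
have x2_0 : x2 = 0 by apply: (scaled_pow_eq0 (n := 2) one_neq0); rewrite -quad; ring.
by rewrite x2_0 mkpt_eq0 !eqxx.
Qed.

Lemma meets_L3_L6a : meets alpha L3 L6a [::].
Proof.
apply: meets0_intro => x0 x1 x2 x3 x4 x5; rewrite /onL !mkptE.
move=> -[x3_0 x4_0 x5_0 _] [x0_0 x1_0 x2_0 _]; subst x0 x1 x2 x3 x4 x5.
by rewrite mkpt_eq0 !eqxx.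
Qed.

Lemma meets_L3_L6b : meets alpha L3 L6b [::].
Proof.
apply: meets0_intro => x0 x1 x2 x3 x4 x5; rewrite /onL !mkptE.
move=> -[x3_0 x4_0 x5_0 _] [x1_0 x2_0 _ quad]; subst x1 x2 x3 x4 x5.
have x0_0 : x0 = 0 by apply: (scaled_pow_eq0 (n := 2) one_neq0); rewrite -quad; ring.
by rewrite x0_0 mkpt_eq0 !eqxx.
Qed.

Lemma meets_L4_L5a : meets alpha L4 L5a [::].
Proof.
apply: meets0_intro => x0 x1 x2 x3 x4 x5; rewrite /onL !mkptE.
move=> -[x0_0 x2_0 x4_0 _] [_ x1_0 x3_0 x5_0]; subst x0 x1 x2 x3 x4 x5.
by rewrite mkpt_eq0 !eqxx.
Qed.

Lemma meets_L4_L5b : meets alpha L4 L5b [::].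
Proof.
apply: meets0_intro => x0 x1 x2 x3 x4 x5; rewrite /onL !mkptE.
move=> -[x0_0 x2_0 x4_0 _] [_ x1_0 x3_0 quad]; subst x0 x1 x2 x3 x4.
have x5_0 : x5 = 0 by apply: (scaled_pow_eq0 (n := 2) alpha_neq0); rewrite -quad; ring.
by rewrite x5_0 mkpt_eq0 !eqxx.
Qed.

Lemma meets_L4_L6b : meets alpha L4 L6b [::].
Proof.
apply: meets0_intro => x0 x1 x2 x3 x4 x5; rewrite /onL !mkptE.
move=> -[x0_0 x2_0 x4_0 _] [x1_0 _ x5_0 quad]; subst x0 x1 x2 x4 x5.
have x3_0 : x3 = 0 by apply: (scaled_pow_eq0 (n := 2) alpha_neq0); rewrite -quad; ring.
by rewrite x3_0 mkpt_eq0 !eqxx.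
Qed.

Lemma meets_L5a_L6b : meets alpha L5a L6b [::].
Proof.
apply: meets0_intro => x0 x1 x2 x3 x4 x5; rewrite /onL !mkptE.
move=> -[x0_0 x1_0 x3_0 x5_0] [_ x2_0 _ quad]; subst x0 x1 x2 x3 x5.
have x4_0 : x4 = 0 by apply: (scaled_pow_eq0 (n := 2) two_neq0); rewrite -quad; ring.
by rewrite x4_0 mkpt_eq0 !eqxx.
Qed.

Lemma meets_L5b_L6a : meets alpha L5b L6a [::].
Proof.
apply: meets0_intro => x0 x1 x2 x3 x4 x5; rewrite /onL !mkptE.
move=> -[_ _ x3_0 quad] [x0_0 x1_0 x2_0 x5_0]; subst x0 x1 x2 x3 x5.
have x4_0 : x4 = 0 by apply: (scaled_pow_eq0 (n := 2) two_neq0); rewrite -quad; ring.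
by rewrite x4_0 mkpt_eq0 !eqxx.
Qed.

Lemma meets_L5b_L6b : meets alpha L5b L6b [::].
Proof.
apply: meets0_intro => x0 x1 x2 x3 x4 x5; rewrite /onL !mkptE.
move=> -[x0_0 x1_0 x3_0 quad] [_ x2_0 x5_0 _]; subst x0 x1 x2 x3 x5.
have x4_0 : x4 = 0 by apply: (scaled_pow_eq0 (n := 2) two_neq0); rewrite -quad; ring.
by rewrite x4_0 mkpt_eq0 !eqxx.
Qed.

Lemma distinct_listed_points :
  distinct_points
    [:: E k 2; E k 3; E k 4; E k 5;
        mkpt 1 0 i 0 0 0; mkpt 1 0 (- i) 0 0 0;
        mkpt 0 0 0 alpha 0 (1 + d); mkpt 0 0 0 alpha 0 (1 - d);
        mkpt 0 0 (i * a) 0 0 1; mkpt 0 0 (- (i * a)) 0 0 1;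
        mkpt (i * a) 0 0 1 0 0; mkpt (- (i * a)) 0 0 1 0 0;
        mkpt 0 0 0 0 a (i * b); mkpt 0 0 0 0 a (- (i * b));
        mkpt b 0 0 0 i 0; mkpt b 0 0 0 (- i) 0;
        mkpt 0 0 b 0 i 0; mkpt 0 0 b 0 (- i) 0;
        mkpt 0 0 0 b (i * a) 0; mkpt 0 0 0 b (- (i * a)) 0].
Proof.
have nonzero := (oppr_eq0, mulf_eq0, oner_eq0, negbTE i_neq0, negbTE a_neq0, negbTE b_neq0,
  negbTE alpha_neq0, negbTE one_add_d_neq0, negbTE one_sub_d_neq0).
(* Scalings preserve supports, and the only listed points sharing a support are the
   eight +/- pairs: each pair agrees at a nonzero coordinate j, which forces the
   scalar to be 1, and differs at the coordinate l. *)
rewrite !E_mkpt; split=> [|m n /andP[lt_mn lt_n] /[dup] /proj_eq_support /eqP].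
  by apply/allP; rewrite /= !mkpt_eq0 !eqxx ?nonzero.
rewrite -!(nth_map 0 [::] (@support k)) ?(ltn_trans lt_mn lt_n) //=.
rewrite !support_mkpt !eqxx ?nonzero /=.
move: lt_n lt_mn; do 20?[case: n => [|n] //]; do 20?[case: m => [|m] //] => _ _ /= _;
  [ apply: (not_proj_eq_pivot (j := 0) (l := 2)) | apply: (not_proj_eq_pivot (j := 3) (l := 5))
  | apply: (not_proj_eq_pivot (j := 5) (l := 2)) | apply: (not_proj_eq_pivot (j := 3) (l := 0))
  | apply: (not_proj_eq_pivot (j := 4) (l := 5)) | apply: (not_proj_eq_pivot (j := 0) (l := 4))
  | apply: (not_proj_eq_pivot (j := 2) (l := 4)) | apply: (not_proj_eq_pivot (j := 3) (l := 4)) ];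
  by rewrite !coord_mkpt //= ?(inj_eq (addrI 1)) ?neq_opp ?mulf_neq0 ?oner_eq0.
Qed.

End LineScheme.

Theorem corollary3p3 (k : closedFieldType) (hchar : [pchar k] =i pred0)
  (alpha : k) (halpha : alpha * (1 - alpha ^+ 2) != 0)
  (i a b d : k) (hi : i ^+ 2 = -1) (ha : a ^+ 2 = alpha) (hb : b ^+ 2 = 2)
  (hd : d ^+ 2 = 1 - alpha ^+ 2) :
  let m := meets alpha in
  (* twenty distinct intersection points *)
  distinct_points
    [:: E k 2; E k 3; E k 4; E k 5;
        mkpt 1 0 i 0 0 0; mkpt 1 0 (- i) 0 0 0;
        mkpt 0 0 0 alpha 0 (1 + d); mkpt 0 0 0 alpha 0 (1 - d);
        mkpt 0 0 (i * a) 0 0 1; mkpt 0 0 (- (i * a)) 0 0 1;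
        mkpt (i * a) 0 0 1 0 0; mkpt (- (i * a)) 0 0 1 0 0;
        mkpt 0 0 0 0 a (i * b); mkpt 0 0 0 0 a (- (i * b));
        mkpt b 0 0 0 i 0; mkpt b 0 0 0 (- i) 0;
        mkpt 0 0 b 0 i 0; mkpt 0 0 b 0 (- i) 0;
        mkpt 0 0 0 b (i * a) 0; mkpt 0 0 0 b (- (i * a)) 0] /\
  (* pairs meeting in exactly one point *)
  m L2 L3 [:: E k 2] /\ m L2 L4 [:: E k 2] /\ m L3 L4 [:: E k 2] /\
  m L3 L5a [:: E k 3] /\ m L4 L6a [:: E k 4] /\ m L5a L6a [:: E k 5] /\
  (* pairs meeting in two distinct points *)
  m L1 L3 [:: mkpt 1 0 i 0 0 0; mkpt 1 0 (- i) 0 0 0] /\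
  m L1 L4 [:: mkpt 0 0 0 alpha 0 (1 + d); mkpt 0 0 0 alpha 0 (1 - d)] /\
  m L1 L5b [:: mkpt 0 0 (i * a) 0 0 1; mkpt 0 0 (- (i * a)) 0 0 1] /\
  m L1 L6b [:: mkpt (i * a) 0 0 1 0 0; mkpt (- (i * a)) 0 0 1 0 0] /\
  m L2 L5b [:: mkpt 0 0 0 0 a (i * b); mkpt 0 0 0 0 a (- (i * b))] /\
  m L2 L6b [:: mkpt b 0 0 0 i 0; mkpt b 0 0 0 (- i) 0] /\
  m L5a L5b [:: mkpt 0 0 b 0 i 0; mkpt 0 0 b 0 (- i) 0] /\
  m L6a L6b [:: mkpt 0 0 0 b (i * a) 0; mkpt 0 0 0 b (- (i * a)) 0] /\
  (* all other pairwise intersections are empty *)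
  m L1 L2 [::] /\ m L1 L5a [::] /\ m L1 L6a [::] /\
  m L2 L5a [::] /\ m L2 L6a [::] /\
  m L3 L5b [::] /\ m L3 L6a [::] /\ m L3 L6b [::] /\
  m L4 L5a [::] /\ m L4 L5b [::] /\ m L4 L6b [::] /\
  m L5a L6b [::] /\ m L5b L6a [::] /\ m L5b L6b [::].
Proof.
have two_neq0 : (2 : k) != 0 by rewrite ((pcharf0P k).1 hchar 2).
have [alpha_neq0 alpha2_neq1] : alpha != 0 /\ alpha ^+ 2 != 1.
  by apply/andP; move: halpha; rewrite mulf_eq0 negb_or subr_eq0 [1 == _]eq_sym.
move=> m; split; first exact: distinct_listed_points.
do !apply: conj.
- exact: meets_L2_L3.   - exact: meets_L2_L4.   - exact: meets_L3_L4.
- exact: meets_L3_L5a.  - exact: meets_L4_L6a.  - exact: meets_L5a_L6a.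
- exact: meets_L1_L3.   - exact: meets_L1_L4.   - exact: meets_L1_L5b.
- exact: meets_L1_L6b.  - exact: meets_L2_L5b.  - exact: meets_L2_L6b.
- exact: meets_L5a_L5b. - exact: meets_L6a_L6b.
- exact: meets_L1_L2.   - exact: meets_L1_L5a.  - exact: meets_L1_L6a.
- exact: meets_L2_L5a.  - exact: meets_L2_L6a.
- exact: meets_L3_L5b.  - exact: meets_L3_L6a.  - exact: meets_L3_L6b.
- exact: meets_L4_L5a.  - exact: meets_L4_L5b.  - exact: meets_L4_L6b.
- exact: meets_L5a_L6b. - exact: meets_L5b_L6a. - exact: meets_L5b_L6b.
Qed.
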